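(* Let $M$ be an infinitesimally flexible Kokotsakis mesh with central $n$-gon whose faces are planar, satisfying for every $i$: $v_i,w_i$ not collinear and $a_{i-1},a_i$ not in the plane spanned by $v_i,w_i$. Let $\pi$ be the plane of the central face, and let $l_i$ be the line of intersection of $\pi$ with the plane through $A_i,V_i,W_i$. Assume $l_i$ and $l_{i+1}$ are not parallel for all $i$, let $B_i=l_i\cap l_{i+1}$, assume $B_{i-1}\neq B_i$ and $A_i\notin\{B_{i-1},B_i\}$, and define real numbers $t_i$ by $A_i=t_iB_{i-1}+(1-t_i)B_i$. Then $$\prod_{i=1}^n\frac{1-t_i}{t_i}=(-1)^n .$$
   Context: A Kokotsakis mesh with central $n$-gon consists of a central face with vertices $A_1,\dots,A_n$ (indices in $\mathbb Z/n\mathbb Z$) and further points $V_i,W_i$ such that at each vertex $A_i$ exactly four faces meet, containing the angles $A_{i+1}A_iA_{i-1}$ (central face), $A_{i-1}A_iV_i$, $V_iA_iW_i$, $W_iA_iA_{i+1}$; the face containing $W_iA_iA_{i+1}$ also contains $A_iA_{i+1}V_{i+1}$. Put $a_i=A_{i+1}-A_i$, $v_i=V_i-A_i$, $w_i=W_i-A_i$. Infinitesimally flexible means: there is a nonzero infinitesimal isometric deformation with the central face fixed (velocities of vertices, not all zero, such that each face undergoes an infinitesimal rigid motion and the central face's vertices have zero velocity). Note $A_i\in l_i$ and $B_{i-1},B_i\in l_i$, so $t_i$ is well defined. *)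

(* Points of Euclidean 3-space are row vectors 'rV[R]_3 over a
   real field R; indices in Z/nZ are modelled by int with n-periodic data. *)
From HB Require Import structures.
From mathcomp Require Import all_boot all_order all_algebra.
Set Implicit Arguments. Unset Strict Implicit. Unset Printing Implicit Defensive.
Import Order.TTheory GRing.Theory Num.Theory.
Local Open Scope ring_scope.

Definition dotp {R : nzRingType} (x y : 'rV[R]_3) : R := \sum_(k < 3) x 0 k * y 0 k.

Definition periodic {T : Type} (n : nat) (f : int -> T) : Prop :=
  forall i : int, f (i + n%:Z) = f i.

Definition in_span2 {R : nzRingType} (x v w : 'rV[R]_3) : Prop :=
  exists a b : R, x = a *: v + b *: w.

Definition not_collinear {R : nzRingType} (v w : 'rV[R]_3) : Prop :=
  forall a b : R, a *: v + b *: w = 0 -> a = 0 /\ b = 0.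

Definition coplanar4 {R : nzRingType} (P Q S T : 'rV[R]_3) : Prop :=
  exists nn : 'rV[R]_3, nn != 0 /\
    dotp (Q - P) nn = 0 /\ dotp (S - P) nn = 0 /\ dotp (T - P) nn = 0.

(* infinitesimal rigid motions of R^3: X |-> X *m S + tau with S skew *)
Definition skew {R : nzRingType} (S : 'M[R]_3) : Prop := S^T = - S.

(* (uA,uV,uW) are velocities of the vertices (A_i,V_i,W_i) such that every face
   (central face A_1..A_n, corner faces A_i V_i W_i, side faces
   A_i A_{i+1} V_{i+1} W_i) undergoes an infinitesimal rigid motion *)
Definition inf_isometric {R : nzRingType} (n : nat)
    (A V W uA uV uW : int -> 'rV[R]_3) : Prop :=
  [/\ periodic n uA, periodic n uV, periodic n uW &
   [/\    (exists (S : 'M[R]_3) (tau : 'rV[R]_3), skew S /\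
      forall i, uA i = A i *m S + tau),
   (forall i, exists (S : 'M[R]_3) (tau : 'rV[R]_3), skew S /\
      [/\ uA i = A i *m S + tau, uV i = V i *m S + tau & uW i = W i *m S + tau]) &
   (forall i, exists (S : 'M[R]_3) (tau : 'rV[R]_3), skew S /\
      [/\ uA i = A i *m S + tau, uA (i + 1) = A (i + 1) *m S + tau,
          uV (i + 1) = V (i + 1) *m S + tau & uW i = W i *m S + tau])]].

(* infinitesimally flexible: a nonzero infinitesimal isometric deformation with
   the central face fixed *)
Definition inf_flexible {R : nzRingType} (n : nat) (A V W : int -> 'rV[R]_3) : Prop :=
  exists uA uV uW : int -> 'rV[R]_3,
    [/\ inf_isometric n A V W uA uV uW,
        (forall i, uA i = 0) &
        ~ (forall i, uA i = 0 /\ uV i = 0 /\ uW i = 0)].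

(* the plane pi = {X | dotp (X - P0) nP = 0}; the line l_i = pi ∩ (A_i + span(v_i,w_i)) *)
Definition on_l {R : nzRingType} (P0 nP : 'rV[R]_3) (A V W : int -> 'rV[R]_3)
    (i : int) (X : 'rV[R]_3) : Prop :=
  dotp (X - P0) nP = 0 /\ in_span2 (X - A i) (V i - A i) (W i - A i).

Definition dir_l {R : nzRingType} (nP : 'rV[R]_3) (A V W : int -> 'rV[R]_3)
    (i : int) (d : 'rV[R]_3) : Prop :=
  dotp d nP = 0 /\ in_span2 d (V i - A i) (W i - A i).

Definition parallel_l {R : nzRingType} (nP : 'rV[R]_3) (A V W : int -> 'rV[R]_3)
    (i j : int) : Prop :=
  forall d, dir_l nP A V W i d <-> dir_l nP A V W j d.

(* Describe the infinitesimal motion of every face by its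
   angular velocity (the axial vector of the skew matrix of the motion).
   Since the central face is fixed, the side face A_i A_(i+1) V_(i+1) W_i
   rotates about its hinge a_i = A_(i+1) - A_i with some speed lam_i.  The
   corner face at A_i shares the vertex W_i with side face i and V_i with
   side face i-1, so lam_i a_i - lam_(i-1) a_(i-1) lies in the plane of the
   corner face; it also lies in the central plane pi, hence is parallel to
   l_i, i.e. to e_i = B_i - B_(i-1).  Expressing the A's through the B's
   turns this into  f_i (1 - t_(i+1)) = - f_(i-1) t_(i-1)  with
   f_i = lam_i det(e_i, e_(i+1), n).  A vanishing lam propagates around the
   mesh and would stop every vertex, so all f_i are nonzero, and multiplying
   the relations over one period gives the formula. *)

From Pilot Require Import Defs.
From HB Require Import structures.
From mathcomp Require Import all_boot all_order all_algebra.
From mathcomp Require Import ring.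
Import Order.TTheory GRing.Theory Num.Theory.
Local Open Scope ring_scope.
Set Implicit Arguments. Unset Strict Implicit. Unset Printing Implicit Defensive.

Section Coordinates.
Variable R : comNzRingType.
Local Notation vec := 'rV[R]_3.

Definition i0 : 'I_3 := ord0.
Definition i1 : 'I_3 := lift ord0 ord0.
Definition i2 : 'I_3 := lift ord0 (lift ord0 ord0).

Definition mk3 (a b c : R) : vec := \row_k [:: a; b; c]`_k.

Lemma vec3P (x y : vec) :
  x 0 i0 = y 0 i0 -> x 0 i1 = y 0 i1 -> x 0 i2 = y 0 i2 -> x = y.
Proof.
move=> h0 h1 h2; apply/rowP => -[[|[|[|//]]] lt3] /=.
- by rewrite (_ : Ordinal lt3 = i0) //; apply: val_inj.
- by rewrite (_ : Ordinal lt3 = i1) //; apply: val_inj.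
- by rewrite (_ : Ordinal lt3 = i2) //; apply: val_inj.
Qed.

Lemma sum3 (F : 'I_3 -> R) : \sum_k F k = F i0 + F i1 + F i2.
Proof. by rewrite !big_ord_recl big_ord0 addr0 addrA. Qed.

Lemma dotpE (x y : vec) :
  dotp x y = x 0 i0 * y 0 i0 + x 0 i1 * y 0 i1 + x 0 i2 * y 0 i2.
Proof. exact: sum3. Qed.

Lemma mulmx_coord (x : vec) (S : 'M[R]_3) j :
  (x *m S) 0 j = x 0 i0 * S i0 j + x 0 i1 * S i1 j + x 0 i2 * S i2 j.
Proof. by rewrite mxE sum3. Qed.

Definition cross (x y : vec) : vec :=
  mk3 (x 0 i1 * y 0 i2 - x 0 i2 * y 0 i1) (x 0 i2 * y 0 i0 - x 0 i0 * y 0 i2)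
      (x 0 i0 * y 0 i1 - x 0 i1 * y 0 i0).

Definition det3 (x y z : vec) : R := dotp (cross x y) z.

(* The axial vector of a matrix: for skew S, x *m S = cross (axial S) x. *)
Definition axial (S : 'M[R]_3) : vec := mk3 (S i1 i2) (S i2 i0) (S i0 i1).

End Coordinates.

Ltac coords := rewrite ?/det3 ?/cross ?/axial ?dotpE ?mulmx_coord ?mxE /=.
Ltac coord_ring := coords; ring.
Ltac vec3_ring := apply: vec3P; coord_ring.

Section Identities.
Variable R : comNzRingType.
Local Notation vec := 'rV[R]_3.
Implicit Types (x y z p q n : vec) (c : R).

Lemma dotpBl x y z : dotp (x - y) z = dotp x z - dotp y z.
Proof. coord_ring. Qed.

Lemma dotpZl c x y : dotp (c *: x) y = c * dotp x y.
Proof. coord_ring. Qed.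

Lemma dotp0l x : dotp 0 x = 0.
Proof. coord_ring. Qed.

Lemma dotpC x y : dotp x y = dotp y x.
Proof. coord_ring. Qed.

Lemma cross0l x : cross 0 x = 0.
Proof. vec3_ring. Qed.

Lemma cross0r x : cross x 0 = 0.
Proof. vec3_ring. Qed.

Lemma crossBl x y z : cross (x - y) z = cross x z - cross y z.
Proof. vec3_ring. Qed.

Lemma crossZl c x y : cross (c *: x) y = c *: cross x y.
Proof. vec3_ring. Qed.

Lemma dotp_cross_l x y : dotp x (cross x y) = 0.
Proof. coord_ring. Qed.

Lemma dotp_cross_r x y : dotp y (cross x y) = 0.
Proof. coord_ring. Qed.

Lemma det3_cross x y n : det3 x y n = dotp y (cross n x).
Proof. coord_ring. Qed.

Lemma lagrange x y :
  dotp (cross x y) (cross x y) = dotp x x * dotp y y - dotp x y * dotp x y.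
Proof. coord_ring. Qed.

(* The double cross product expansion, in the form used to detect
   parallel vectors. *)
Lemma cross_cross x y : dotp x x *: y = dotp x y *: x + cross x (cross y x).
Proof. vec3_ring. Qed.

Lemma gram p q x : let m := cross p q in
  dotp m m *: x = (dotp x p * dotp q q - dotp x q * dotp p q) *: p
     + (dotp x q * dotp p p - dotp x p * dotp p q) *: q + dotp x m *: m.
Proof. rewrite /=; vec3_ring. Qed.

Lemma norm_reject (v w : vec) :
  let r := dotp w w *: v + (- dotp v w) *: w in
  dotp r r = dotp w w * dotp (cross v w) (cross v w).
Proof. rewrite /=; coord_ring. Qed.

Lemma det3_lin2 c c' e x y n :
  det3 e (c *: x - c' *: y) n = c * det3 e x n - c' * det3 e y n.
Proof. coord_ring. Qed.

Lemma det3_self2 c e n : det3 e (c *: e) n = 0.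
Proof. coord_ring. Qed.

(* Triple products of the differences of consecutive points
   A_i = t_i B_(i-1) + (1 - t_i) B_i of a polygon on the lines l_i. *)
Lemma det3_affine_next (b0 b1 b2 n : vec) (t0 t1 : R) :
  det3 (b1 - b0) ((t1 *: b1 + (1 - t1) *: b2) - (t0 *: b0 + (1 - t0) *: b1)) n =
  (1 - t1) * det3 (b1 - b0) (b2 - b1) n.
Proof. coord_ring. Qed.

Lemma det3_affine_prev (bm b0 b1 n : vec) (t0 t1 : R) :
  det3 (b1 - b0) ((t1 *: b0 + (1 - t1) *: b1) - (t0 *: bm + (1 - t0) *: b0)) n =
  - (t0 * det3 (b0 - bm) (b1 - b0) n).
Proof. coord_ring. Qed.

Lemma affine_diff (t t' : R) (b0 b1 : vec) :
  (t' *: b0 + (1 - t') *: b1) - (t *: b0 + (1 - t) *: b1) = (t' - t) *: (b0 - b1).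
Proof. vec3_ring. Qed.

Lemma span_perp_cross (x v w : vec) : in_span2 x v w -> dotp x (cross v w) = 0.
Proof. by move=> [a [b ->]]; coord_ring. Qed.

Lemma span_sub (x y v w : vec) :
  in_span2 x v w -> in_span2 y v w -> in_span2 (x - y) v w.
Proof. by move=> [a [b ->]] [c [d ->]]; exists (a - c), (b - d); vec3_ring. Qed.

Lemma spanZ c (x v w : vec) : in_span2 x v w -> in_span2 (c *: x) v w.
Proof. by move=> [a [b ->]]; exists (c * a), (c * b); vec3_ring. Qed.

Lemma span_right c (v w : vec) : in_span2 (c *: w) v w.
Proof. by exists 0, c; rewrite scale0r add0r. Qed.

(* An infinitesimal motion X |-> X S + tau, seen from a point Y of the
   face that does not move. *)
Lemma velocity_rel (S : 'M[R]_3) (tau X Y : vec) :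
  Y *m S + tau = 0 -> X *m S + tau = (X - Y) *m S.
Proof. by move=> hY; rewrite mulmxBl -[X *m S + tau]subr0 -hY opprD addrACA subrr addr0. Qed.

End Identities.

Section Euclidean.
Variable R : realFieldType.
Local Notation vec := 'rV[R]_3.
Implicit Types (x y z p q n v w : vec) (c : R).

Lemma dotp_self_eq0 x : dotp x x = 0 -> x = 0.
Proof.
have sq_ge0 (r : R) : 0 <= r * r by rewrite -expr2 sqr_ge0.
have sq_eq0 (r : R) : r * r == 0 -> r = 0 by rewrite mulf_eq0 orbb => /eqP.
rewrite dotpE => /eqP; rewrite paddr_eq0 ?addr_ge0 // => /andP[].
rewrite paddr_eq0 // => /andP[/sq_eq0 h0 /sq_eq0 h1] /sq_eq0 h2.
by apply: vec3P; rewrite mxE.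
Qed.

Lemma dotp_self_neq0 x : x != 0 -> dotp x x != 0.
Proof. by apply: contraNneq => /dotp_self_eq0 ->. Qed.

Lemma cross_eq0_parallel y x : cross y x = 0 -> x != 0 -> exists c, y = c *: x.
Proof.
move=> hyx hx; exists (dotp x y / dotp x x); have hxx := dotp_self_neq0 hx.
apply: (scalerI hxx); rewrite cross_cross hyx cross0r addr0 scalerA.
by rewrite mulrCA mulfV // mulr1.
Qed.

Lemma cross_perp_neq0 p q : p != 0 -> q != 0 -> dotp p q = 0 -> cross p q != 0.
Proof.
move=> hp hq hpq; apply/eqP => h0.
have := lagrange p q; rewrite h0 hpq dotp0l mulr0 subr0 => /esym /eqP.
by rewrite mulf_eq0 (negbTE (dotp_self_neq0 hp)) (negbTE (dotp_self_neq0 hq)).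
Qed.

Lemma noncollinear_neq0 v w : not_collinear v w -> v != 0 /\ w != 0.
Proof.
move=> hvw; split; apply/eqP => h0.
- have [] := hvw 1 0; first by rewrite h0 scaler0 scale0r addr0.
  by move/eqP; rewrite oner_eq0.
- have [] := hvw 0 1; first by rewrite h0 scaler0 scale0r addr0.
  by move=> _ /eqP; rewrite oner_eq0.
Qed.

Lemma noncollinear_cross v w : not_collinear v w -> cross v w != 0.
Proof.
move=> hvw; have [_ hw] := noncollinear_neq0 hvw.
apply: contraNneq (dotp_self_neq0 hw) => h0.
have := norm_reject v w; rewrite h0 dotp0l mulr0 => /dotp_self_eq0.
by case/hvw => ->.
Qed.

Lemma common_perp_parallel p q x y : cross p q != 0 ->
  dotp x p = 0 -> dotp x q = 0 -> dotp y p = 0 -> dotp y q = 0 -> x != 0 ->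
  exists c, y = c *: x.
Proof.
move=> hm hxp hxq hyp hyq hx; set m := cross p q.
have hmm := dotp_self_neq0 hm.
have on_m z : dotp z p = 0 -> dotp z q = 0 -> z = (dotp z m / dotp m m) *: m.
  move=> hzp hzq; apply: (scalerI hmm); rewrite gram hzp hzq !mul0r subrr.
  by rewrite !scale0r !add0r scalerA mulrCA mulfV // mulr1.
rewrite (on_m y hyp hyq) (on_m x hxp hxq) in hx *; set a := _ / _ in hx *.
have ha : a != 0 by apply: contraNneq hx => ->; rewrite scale0r.
by exists ((dotp y m / dotp m m) / a); rewrite scalerA divfK.
Qed.

Lemma perp_cross_span x v w : cross v w != 0 -> dotp x (cross v w) = 0 ->
  in_span2 x v w.
Proof.
move=> hm hxm; have hmm := dotp_self_neq0 hm.
exists ((dotp x v * dotp w w - dotp x w * dotp v w) / dotp (cross v w) (cross v w)).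
exists ((dotp x w * dotp v v - dotp x v * dotp v w) / dotp (cross v w) (cross v w)).
apply: (scalerI hmm); rewrite gram hxm scale0r addr0 scalerDr !scalerA.
by rewrite ![dotp (cross v w) _ * (_ / _)]mulrCA mulfV // !mulr1.
Qed.

(* Two distinct planes through the origin (here n^\perp and span(v, w),
   distinct because a lies in the first but not the second) meet in a line. *)
Lemma planes_meet_in_line v w a n d d' : not_collinear v w ->
  dotp a n = 0 -> ~ in_span2 a v w -> n != 0 ->
  dotp d n = 0 -> in_span2 d v w -> dotp d' n = 0 -> in_span2 d' v w ->
  d != 0 -> exists c, d' = c *: d.
Proof.
move=> hvw han ha hn hdn hd hd'n hd' hd0; have hm := noncollinear_cross hvw.
have hmn : cross (cross v w) n != 0.
  apply/eqP => /cross_eq0_parallel /(_ hn) [c hc]; apply: ha.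
  by apply: perp_cross_span => //; rewrite hc dotpC dotpZl dotpC han mulr0.
apply: (common_perp_parallel hmn) => //; exact: span_perp_cross.
Qed.

Lemma det3_eq0_parallel e y n : n != 0 -> e != 0 ->
  dotp e n = 0 -> dotp y n = 0 -> det3 e y n = 0 -> exists c, y = c *: e.
Proof.
move=> hn he hen hyn hd; have hne := cross_perp_neq0 hn he (etrans (dotpC _ _) hen).
have hm := cross_perp_neq0 hn hne (dotp_cross_l n e).
apply: (common_perp_parallel hm) => //; first exact: dotp_cross_r.
by rewrite -det3_cross.
Qed.

Lemma skew_mulmx (S : 'M[R]_3) x : Defs.skew S -> x *m S = cross (axial S) x.
Proof.
move=> /matrixP hS; have E i j : S j i = - S i j by have := hS i j; rewrite !mxE.
have diag0 i : S i i = 0.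
  by move/eqP: (E i i); rewrite -addr_eq0 -mulr2n mulrn_eq0 => /eqP.
by apply: vec3P; coords; rewrite ?diag0 ?(E i0 i1) ?(E i1 i2) ?(E i2 i0); ring.
Qed.

Lemma same_velocity_axial (S T : 'M[R]_3) x : Defs.skew S -> Defs.skew T ->
  x *m S = x *m T -> x != 0 -> exists c, axial T - axial S = c *: x.
Proof.
move=> hS hT hST; apply: cross_eq0_parallel.
by rewrite crossBl -!skew_mulmx // hST subrr.
Qed.

Lemma affine_coord_inj (b0 b1 : vec) (t t' : R) : b0 != b1 ->
  t *: b0 + (1 - t) *: b1 = t' *: b0 + (1 - t') *: b1 -> t = t'.
Proof.
move=> hb /eqP; rewrite -subr_eq0 affine_diff scaler_eq0 !subr_eq0 (negbTE hb) orbF.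
by move=> /eqP.
Qed.
End Euclidean.

Lemma int_propagate (P : int -> Prop) :
  (forall i, P i <-> P (i - 1)) -> forall k i, P k -> P i.
Proof.
move=> stepP k i Pk.
have up (m : nat) : P (k + m%:Z).
  elim: m => [|m IH]; first by rewrite addr0.
  by rewrite stepP intS (addrC 1) addrA addrK.
have down (m : nat) : P (k - m%:Z).
  elim: m => [|m IH]; first by rewrite subr0.
  by rewrite intS (addrC 1) opprD addrA -stepP.
rewrite -(subrK k i) addrC; case: (i - k) => m; first exact: up.
by rewrite NegzE; exact: down.
Qed.

Section PeriodicProducts.
Variables (R : comPzRingType) (n : nat).
Hypothesis n_gt0 : (0 < n)%N.

Lemma prod_period_shift (h : int -> R) : periodic n h ->
  \prod_(1 <= i < n.+1) h (i%:Z + 1) = \prod_(1 <= i < n.+1) h i%:Z.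
Proof.
move=> hp; rewrite big_nat_recr // big_nat_recl //= mulrC.
congr (_ * _); first by rewrite addrC hp.
by apply: eq_bigr => i _; rewrite intS addrC.
Qed.

Lemma prod_period_shift_pred (h : int -> R) : periodic n h ->
  \prod_(1 <= i < n.+1) h (i%:Z - 1) = \prod_(1 <= i < n.+1) h i%:Z.
Proof.
move=> hp; rewrite -(prod_period_shift (h := fun j => h (j - 1))) => [|j].
  by apply: eq_bigr => i _; rewrite addrK.
by rewrite addrAC hp.
Qed.

End PeriodicProducts.

Lemma cyclic_ratio_product (R : fieldType) (n : nat) (f s t : int -> R) :
  (0 < n)%N -> periodic n f -> periodic n s -> periodic n t ->
  (forall i, f i != 0) -> (forall i, t i != 0) ->
  (forall i, f i * s (i + 1) = - (f (i - 1) * t (i - 1))) ->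
  \prod_(1 <= i < n.+1) (s i%:Z / t i%:Z) = (-1) ^+ n.
Proof.
move=> n_gt0 pf ps pt f_neq0 t_neq0 rec.
set F := \prod_(1 <= i < n.+1) f i%:Z; set T := \prod_(1 <= i < n.+1) t i%:Z.
have F_neq0 : F != 0 by rewrite prodf_seq_neq0; apply/allP => i _; apply: f_neq0.
have : F * \prod_(1 <= i < n.+1) s i%:Z = F * ((-1) ^+ n * T).
  rewrite -(prod_period_shift n_gt0 ps) -big_split /=.
  rewrite (eq_bigr (fun i : nat => -1 * (f (i%:Z - 1) * t (i%:Z - 1)))); last first.
    by move=> i _; rewrite rec mulN1r.
  rewrite big_split prodr_const_nat subn1 big_split /=.
  by rewrite !prod_period_shift_pred // mulrCA.
move/(mulfI F_neq0); rewrite prodf_div => ->.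
by rewrite mulfK // prodf_seq_neq0; apply/allP => i _; apply: t_neq0.
Qed.

Section KokotsakisMesh.
(* Hypotheses whose types are unfoldable propositions keep explicit indices. *)
Local Unset Implicit Arguments.
Variables (R : realFieldType) (n : nat).
Local Notation vec := 'rV[R]_3.
Variables (A V W : int -> vec) (P0 nP : vec) (B : int -> vec) (t : int -> R).
Variables (uA uV uW : int -> vec).

Hypothesis A_periodic : periodic n A.
Hypothesis V_periodic : periodic n V.
Hypothesis W_periodic : periodic n W.
Hypothesis nP_neq0 : nP != 0.
Hypothesis A_in_pi : forall i, dotp (A i - P0) nP = 0.
Hypothesis motion : inf_isometric n A V W uA uV uW.
Hypothesis uA0 : forall i, uA i = 0.
Hypothesis u_nonzero : ~ (forall i, uA i = 0 /\ uV i = 0 /\ uW i = 0).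
Hypothesis corner_noncollinear : forall i, not_collinear (V i - A i) (W i - A i).
Hypothesis edges_transversal : forall i,
  ~ in_span2 (A i - A (i - 1)) (V i - A i) (W i - A i) /\
  ~ in_span2 (A (i + 1) - A i) (V i - A i) (W i - A i).
Hypothesis lines_not_parallel : forall i, ~ parallel_l nP A V W i (i + 1).
Hypothesis B_on_lines : forall i,
  on_l P0 nP A V W i (B i) /\ on_l P0 nP A V W (i + 1) (B i).
Hypothesis B_distinct : forall i, B (i - 1) != B i.
Hypothesis A_not_B : forall i, A i != B (i - 1) /\ A i != B i.
Hypothesis A_on_segment : forall i, A i = t i *: B (i - 1) + (1 - t i) *: B i.
Local Set Implicit Arguments.
Implicit Types (i : int) (X Y d : vec) (c : R).

Local Notation edge i := (A (i + 1) - A i).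
Local Notation vc i := (V i - A i).
Local Notation wc i := (W i - A i).
Local Notation e i := (B i - B (i - 1)).

Lemma pi_dir X Y : dotp (X - P0) nP = 0 -> dotp (Y - P0) nP = 0 ->
  dotp (X - Y) nP = 0.
Proof.
move=> hX hY; have -> : X - Y = (X - P0) - (Y - P0) by rewrite opprB addrA subrK.
by rewrite dotpBl hX hY subrr.
Qed.

Lemma edge_in_pi i : dotp (edge i) nP = 0.
Proof. exact: pi_dir. Qed.

Lemma on_l_dir i X Y : on_l P0 nP A V W i X -> on_l P0 nP A V W i Y ->
  dir_l nP A V W i (X - Y).
Proof.
move=> [Xpi Xs] [Ypi Ys]; split; first exact: pi_dir.
have -> : X - Y = (X - A i) - (Y - A i) by rewrite opprB addrA subrK.
exact: span_sub.
Qed.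

Lemma dir_lZ i c d : dir_l nP A V W i d -> dir_l nP A V W i (c *: d).
Proof. by move=> [dn ds]; split; [rewrite dotpZl dn mulr0 | exact: spanZ]. Qed.

Lemma dir_l_parallel i d d' : dir_l nP A V W i d -> d != 0 ->
  dir_l nP A V W i d' -> exists c, d' = c *: d.
Proof.
move=> [dn ds] d0 [dn' ds'].
exact: (planes_meet_in_line (corner_noncollinear i) (edge_in_pi i)
  (edges_transversal i).2 nP_neq0 dn ds dn' ds' d0).
Qed.

Lemma lines_meet_once i X :
  on_l P0 nP A V W i X -> on_l P0 nP A V W (i + 1) X -> X = B i.
Proof.
move=> Xi Xi1; have [Bi Bi1] := B_on_lines i.
apply/eqP; rewrite -subr_eq0; apply/negPn/negP => d0.
have di := on_l_dir Xi Bi; have di1 := on_l_dir Xi1 Bi1.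
apply: (lines_not_parallel i) => d; split => hd.
- by have [c ->] := dir_l_parallel di d0 hd; apply: dir_lZ.
- by have [c ->] := dir_l_parallel di1 d0 hd; apply: dir_lZ.
Qed.

(* B_(i-1) and B_i both lie on l_i, so e_i is a (nonzero) direction of l_i. *)
Lemma e_dir i : dir_l nP A V W i (e i).
Proof.
apply: on_l_dir; first exact: (B_on_lines i).1.
by have := (B_on_lines (i - 1)).2; rewrite subrK.
Qed.

Lemma e_neq0 i : e i != 0.
Proof. by rewrite subr_eq0 eq_sym. Qed.

Lemma on_l_periodic i X : on_l P0 nP A V W (i + n) X <-> on_l P0 nP A V W i X.
Proof. by rewrite /on_l A_periodic V_periodic W_periodic. Qed.

Lemma B_periodic : periodic n B.
Proof.
move=> i; apply: lines_meet_once; rewrite -on_l_periodic; first exact: (B_on_lines _).1.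
by rewrite addrAC; exact: (B_on_lines _).2.
Qed.

Lemma t_periodic : periodic n t.
Proof.
move=> i; apply: (affine_coord_inj (B_distinct i)).
by rewrite -A_on_segment -(A_periodic i) A_on_segment addrAC !B_periodic.
Qed.

Lemma t_neq0 i : t i != 0.
Proof.
apply: contraNneq (A_not_B i).2 => t0.
by rewrite {1}A_on_segment t0 scale0r add0r subr0 scale1r.
Qed.

Definition hinge_normal i : vec := cross (edge i) (wc i).

(* The speed lam_i of the rotation of side face i about its hinge a_i, read
   off from the velocity u_W_i = lam_i (a_i \times w_i) of its vertex W_i. *)
Definition lam i : R :=
  dotp (uW i) (hinge_normal i) / dotp (hinge_normal i) (hinge_normal i).

(* a_i is not in the corner plane at A_i, in particular nonzero. *)
Lemma edge_neq0 i : edge i != 0.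
Proof.
apply/eqP => e0; apply: (edges_transversal i).2; rewrite e0.
by exists 0, 0; rewrite !scale0r addr0.
Qed.

Lemma hinge_normal_neq0 i : hinge_normal i != 0.
Proof.
apply/eqP => h0; have [_ hw] := noncollinear_neq0 (corner_noncollinear i).
have [c hc] := cross_eq0_parallel h0 hw.
by apply: (edges_transversal i).2; rewrite hc; apply: span_right.
Qed.

Lemma side_motion i : exists S : 'M[R]_3,
  [/\ Defs.skew S, axial S = lam i *: edge i,
      uV (i + 1) = vc (i + 1) *m S & uW i = wc i *m S].
Proof.
have [_ _ _ [_ _ side]] := motion.
have [S [tau [hS [hA hA1 hV1 hW]]]] := side i.
have fixed_i : A i *m S + tau = 0 by rewrite -hA uA0.
have fixed_i1 : A (i + 1) *m S + tau = 0 by rewrite -hA1 uA0.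
have uW_S : uW i = wc i *m S by rewrite hW (velocity_rel _ fixed_i).
have hinge : cross (axial S) (edge i) = 0.
  by rewrite -skew_mulmx // -(velocity_rel _ fixed_i).
exists S; split => //; last by rewrite hV1 (velocity_rel _ fixed_i1).
have [c hc] := cross_eq0_parallel hinge (edge_neq0 i).
suff -> : lam i = c by [].
rewrite /lam uW_S skew_mulmx // hc crossZl dotpZl mulfK //.
exact/dotp_self_neq0/hinge_normal_neq0.
Qed.

Lemma corner_motion i : exists T : 'M[R]_3,
  [/\ Defs.skew T, uV i = vc i *m T & uW i = wc i *m T].
Proof.
have [_ _ _ [_ corner _]] := motion.
have [T [tau [hT [hA hV hW]]]] := corner i.
have fixed : A i *m T + tau = 0 by rewrite -hA uA0.
by exists T; rewrite hV hW !(velocity_rel _ fixed).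
Qed.

(* The corner face at A_i shares W_i with side face i and V_i with side face
   i - 1, so the difference of their angular velocities lies in its plane. *)
Lemma corner_relation i :
  in_span2 (lam i *: edge i - lam (i - 1) *: edge (i - 1)) (vc i) (wc i).
Proof.
have [vi0 wi0] := noncollinear_neq0 (corner_noncollinear i).
have [T [hT uVT uWT]] := corner_motion i.
have [S [hS axS _ uWS]] := side_motion i.
have [S' [hS' axS' uVS' _]] := side_motion (i - 1).
rewrite subrK in uVS'.
have [mu hmu] := same_velocity_axial hT hS (etrans (esym uWT) uWS) wi0.
have [nu hnu] := same_velocity_axial hT hS' (etrans (esym uVT) uVS') vi0.
exists (- nu), mu; rewrite -axS -axS'.
have -> : axial S - axial S' = (axial S - axial T) - (axial S' - axial T).
  by rewrite opprB addrA subrK.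
by rewrite hmu hnu scaleNr addrC.
Qed.

(* That difference also lies in pi, hence is parallel to l_i. *)
Lemma lam_relation i :
  lam i * det3 (e i) (edge i) nP = lam (i - 1) * det3 (e i) (edge (i - 1)) nP.
Proof.
have xn : dotp (lam i *: edge i - lam (i - 1) *: edge (i - 1)) nP = 0.
  by rewrite dotpBl !dotpZl !edge_in_pi !mulr0 subrr.
have [c hc] := dir_l_parallel (e_dir i) (e_neq0 i) (conj xn (corner_relation i)).
by apply/eqP; rewrite -subr_eq0 -det3_lin2 hc det3_self2.
Qed.

Definition D i : R := det3 (e i) (e (i + 1)) nP.

Lemma det3_edge i : det3 (e i) (edge i) nP = (1 - t (i + 1)) * D i.
Proof.
by rewrite /D [A (i + 1)]A_on_segment [A i]A_on_segment addrK det3_affine_next.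
Qed.

Lemma det3_prev_edge i :
  det3 (e i) (edge (i - 1)) nP = - (t (i - 1) * D (i - 1)).
Proof.
by rewrite /D subrK [A i]A_on_segment [A (i - 1)]A_on_segment det3_affine_prev.
Qed.

Lemma det3_e_neq0 i x : dotp x nP = 0 -> ~ in_span2 x (vc i) (wc i) ->
  det3 (e i) x nP != 0.
Proof.
move=> xn xs; apply/eqP => d0; have [edn eds] := e_dir i.
have [c hc] := det3_eq0_parallel nP_neq0 (e_neq0 i) edn xn d0.
by apply: xs; rewrite hc; apply: spanZ.
Qed.

Lemma det3_edge_neq0 i : det3 (e i) (edge i) nP != 0.
Proof. exact: det3_e_neq0 (edge_in_pi i) (edges_transversal i).2. Qed.

Lemma det3_prev_edge_neq0 i : det3 (e i) (edge (i - 1)) nP != 0.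
Proof.
by apply: det3_e_neq0 (edge_in_pi (i - 1)) _; rewrite subrK; exact: (edges_transversal i).1.
Qed.

Lemma D_neq0 i : D i != 0.
Proof. by have := det3_edge_neq0 i; rewrite det3_edge mulf_eq0 negb_or => /andP[]. Qed.

(* Since both triple products in lam_relation are nonzero, lam_i vanishes
   exactly when lam_(i-1) does. *)
Lemma lam_eq0_step i : lam i = 0 <-> lam (i - 1) = 0.
Proof.
have rel := lam_relation i; split => lam0; rewrite lam0 mul0r in rel.
- by move/eqP: rel; rewrite eq_sym mulf_eq0 (negbTE (det3_prev_edge_neq0 i)) orbF => /eqP.
- by move/eqP: rel; rewrite mulf_eq0 (negbTE (det3_edge_neq0 i)) orbF => /eqP.
Qed.

(* If one side face stood still, all would (the relation propagates around
   the mesh), and then no vertex would move at all. *)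
Lemma lam_neq0 i : lam i != 0.
Proof.
apply/eqP => lam0; have all0 j : lam j = 0 by apply: (int_propagate lam_eq0_step) lam0.
apply: u_nonzero => j; split; first exact: uA0.
have [S [hS axS _ uWS]] := side_motion j.
have [S' [hS' axS' uVS' _]] := side_motion (j - 1).
rewrite subrK in uVS'.
by rewrite uVS' uWS !skew_mulmx // axS axS' !all0 !scale0r !cross0l.
Qed.

Lemma lam_periodic : periodic n lam.
Proof.
have [_ _ uW_periodic _] := motion.
by move=> i; rewrite /lam /hinge_normal (addrAC i n%:Z 1) !A_periodic W_periodic uW_periodic.
Qed.

Lemma D_periodic : periodic n D.
Proof.
by move=> i; rewrite /D !addrK (addrAC i n%:Z 1) (addrAC i n%:Z (-1)) !B_periodic.
Qed.

Lemma weight_recursion i :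
  lam i * D i * (1 - t (i + 1)) = - (lam (i - 1) * D (i - 1) * t (i - 1)).
Proof.
rewrite -mulrA (mulrC (D i)) -det3_edge lam_relation det3_prev_edge.
by rewrite mulrN mulrA mulrAC.
Qed.

Lemma mesh_product : (0 < n)%N ->
  \prod_(1 <= i < n.+1) ((1 - t i%:Z) / t i%:Z) = (-1) ^+ n.
Proof.
move=> n_gt0.
apply: (cyclic_ratio_product (f := fun i => lam i * D i) (s := fun i => 1 - t i)) => //.
- by move=> i; rewrite lam_periodic D_periodic.
- by move=> i; rewrite t_periodic.
- exact: t_periodic.
- by move=> i; rewrite mulf_neq0 ?lam_neq0 ?D_neq0.
- exact: t_neq0.
- exact: weight_recursion.
Qed.

End KokotsakisMesh.

Theorem theorem3 (R : realFieldType) (n : nat) (A V W : int -> 'rV[R]_3)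
    (P0 nP : 'rV[R]_3) (B : int -> 'rV[R]_3) (t : int -> R) :
  (3 <= n)%N ->
  periodic n A -> periodic n V -> periodic n W ->
  (forall i, coplanar4 (A i) (A (i + 1)) (V (i + 1)) (W i)) ->
  nP != 0 -> (forall i, dotp (A i - P0) nP = 0) ->
  (exists i j k : int, not_collinear (A j - A i) (A k - A i)) ->
  inf_flexible n A V W ->
  (forall i, not_collinear (V i - A i) (W i - A i)) ->
  (forall i, ~ in_span2 (A i - A (i - 1)) (V i - A i) (W i - A i) /\
             ~ in_span2 (A (i + 1) - A i) (V i - A i) (W i - A i)) ->
  (forall i, ~ parallel_l nP A V W i (i + 1)) ->
  (forall i, on_l P0 nP A V W i (B i) /\ on_l P0 nP A V W (i + 1) (B i)) ->
  (forall i, B (i - 1) != B i) ->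
  (forall i, A i != B (i - 1) /\ A i != B i) ->
  (forall i, A i = t i *: B (i - 1) + (1 - t i) *: B i) ->
  \prod_(1 <= i < n.+1) ((1 - t i%:Z) / t i%:Z) = (-1) ^+ n.
Proof.
move=> n_ge3 pA pV pW _ nP_neq0 A_in_pi _ [uA [uV [uW [motion uA0 u_nonzero]]]].
move=> corner_noncollinear edges_transversal lines_not_parallel B_on_lines.
move=> B_distinct A_not_B A_on_segment.
apply: (mesh_product pA pV pW nP_neq0 A_in_pi motion uA0 u_nonzero
  corner_noncollinear edges_transversal lines_not_parallel B_on_lines
  B_distinct A_not_B A_on_segment).
exact: leq_trans n_ge3.
Qed.
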